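(* Let $\theta\in\mathbb{R}$, $q=e^{2\pi i\theta}$, let $A_\theta$ be the unital $\mathbb{C}$-algebra generated by invertible $U,V$ with $UV=qVU$, and let $R=\mathbb{C}[U,U^{-1}]\subset A_\theta$ with $\mathfrak s=\mathfrak t:R\to A_\theta$ the inclusion. Define $\Delta(U^nV^m)=U^nV^m\otimes_R V^m$ and $\varepsilon(U^nV^m)=U^n$ (extended linearly). Then: (1) $(A_\theta,\mathfrak s,\mathfrak t,\Delta,\varepsilon)$ is a left $\times_R$-Hopf algebra, i.e. a left $R$-bialgebroid for which $\nu:A_\theta\otimes_{R^{op}}A_\theta\to A_\theta\otimes_R A_\theta$, $k\otimes k'\mapsto k_{(1)}\otimes_R k_{(2)}k'$, is bijective; (2) the map $\delta:A_\theta\to R$, $\delta(U^nV^m)=q^{nm}U^n$, is a right character; (3) $R$ with the right action $U^k\triangleleft U^nV^m=q^{(k+n)m}U^{k+n}$ and the coaction $U^n\mapsto U^n\otimes_R1$ is a right-left SAYD module ${}^1R_\delta$ over $A_\theta$.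
   Context: A left $R$-bialgebroid is a $\mathbb{C}$-algebra $\mathcal K$ with algebra maps $\mathfrak s:R\to\mathcal K$, $\mathfrak t:R^{op}\to\mathcal K$ with commuting ranges, $R$-bimodule structure $r_1\cdot k\cdot r_2=\mathfrak s(r_1)\mathfrak t(r_2)k$, and $R$-bimodule maps $\Delta(k)=k_{(1)}\otimes_R k_{(2)}$, $\varepsilon:\mathcal K\to R$ forming a coassociative counital $R$-coring, with $k_{(1)}\mathfrak t(r)\otimes_R k_{(2)}=k_{(1)}\otimes_R k_{(2)}\mathfrak s(r)$, $\Delta(1)=1\otimes_R1$, $\Delta(kk')=k_{(1)}k'_{(1)}\otimes_R k_{(2)}k'_{(2)}$, $\varepsilon(1)=1_R$, $\varepsilon(kk')=\varepsilon(k\mathfrak s(\varepsilon(k')))$. It is a left $\times_R$-Hopf algebra if $\nu$ (domain balanced by $k\mathfrak t(r)\otimes k'=k\otimes\mathfrak t(r)k'$) is bijective; write $\nu^{-1}(k\otimes_R1)=k^-\otimes_{R^{op}}k^+$. A right character is a map $\delta:\mathcal K\to R$ with $\delta(k\mathfrak s(r))=\delta(k)r$, $\delta(k_1k_2)=\delta(\mathfrak s(\delta(k_1))k_2)$, $\delta(1)=1_R$. A right-left SAYD module over $\mathcal K$: a right $\mathcal K$-module and left $\mathcal K$-comodule $M$ (coaction $m\mapsto m_{(-1)}\otimes_R m_{(0)}$, left $R$-linear, coassociative, counital) with left $R$-action $r\cdot m=m\mathfrak t(r)$ and $\varepsilon(m_{(-1)}\mathfrak s(r))\cdot m_{(0)}=m\mathfrak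 s(r)$, satisfying $(mk)_{(-1)}\otimes_R(mk)_{(0)}=k_{(2)}{}^{+}m_{(-1)}k_{(1)}\otimes_R m_{(0)}k_{(2)}{}^{-}$ and $m_{(0)}m_{(-1)}=m$. *)

From HB Require Import structures.
From mathcomp Require Import all_boot all_order all_algebra.
Set Implicit Arguments.
Unset Strict Implicit.
Unset Printing Implicit Defensive.
Import Order.TTheory GRing.Theory Num.Theory.
Local Open Scope ring_scope.

(* Balanced tensor products, represented by finite formal sums of pairs.    *)
(* Two formal sums w1, w2 : seq (X * Y) denote the same element of the      *)
(* tensor product  X (x)_R Y  (X a right R-module via ra, Y a left          *)
(* R-module via la, everything K-linear) iff every K-bilinear R-balanced    *)
(* K-valued form takes the same value on them (linear forms separate the    *)
(* points of the K-vector space X (x)_R Y).                                  *)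
Section Tensor.
Variables (K : fieldType) (X Y : lmodType K) (R : Type).
Variables (ra : X -> R -> X) (la : R -> Y -> Y).

Definition bal2 (f : X -> Y -> K) : Prop :=
  [/\ forall y a x1 x2, f (a *: x1 + x2) y = a * f x1 y + f x2 y,
      forall x a y1 y2, f x (a *: y1 + y2) = a * f x y1 + f x y2 &
      forall x r y, f (ra x r) y = f x (la r y)].

Definition teval (f : X -> Y -> K) (w : seq (X * Y)) : K :=
  \sum_(p <- w) f p.1 p.2.

Definition teq (w1 w2 : seq (X * Y)) : Prop :=
  forall f, bal2 f -> teval f w1 = teval f w2.

Definition tscale (a : K) (w : seq (X * Y)) : seq (X * Y) :=
  [seq (a *: p.1, p.2) | p <- w].
End Tensor.

Section Tensor3.
Variables (K : fieldType) (X Y Z : lmodType K) (R : Type).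
Variables (ra1 : X -> R -> X) (la1 : R -> Y -> Y).
Variables (ra2 : Y -> R -> Y) (la2 : R -> Z -> Z).

Definition bal3 (f : X -> Y -> Z -> K) : Prop :=
  [/\ forall y z a x1 x2, f (a *: x1 + x2) y z = a * f x1 y z + f x2 y z,
      forall x z a y1 y2, f x (a *: y1 + y2) z = a * f x y1 z + f x y2 z,
      forall x y a z1 z2, f x y (a *: z1 + z2) = a * f x y z1 + f x y z2,
      forall x r y z, f (ra1 x r) y z = f x (la1 r y) z &
      forall x y r z, f x (ra2 y r) z = f x y (la2 r z)].
End Tensor3.

Definition is_basis (K : fieldType) (V : lmodType K) (I : eqType)
    (b : I -> V) : Prop :=
  (forall v : V, exists (S : seq I) (c : I -> K), v = \sum_(i <- S) c i *: b i)
  /\ (forall (S : seq I) (c : I -> K), uniq S ->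
        \sum_(i <- S) c i *: b i = 0 -> forall i, i \in S -> c i = 0).

Definition klinear (K : fieldType) (V W : lmodType K) (f : V -> W) : Prop :=
  forall a x y, f (a *: x + y) = a *: f x + f y.

Definition kbilinear (K : fieldType) (V W Z : lmodType K)
    (f : V -> W -> Z) : Prop :=
  (forall w a x y, f (a *: x + y) w = a *: f x w + f y w) /\
  (forall v a x y, f v (a *: x + y) = a *: f v x + f v y).

Section Bialgebroid.
Variables (K : fieldType) (R A : algType K).
Variables (s t : R -> A) (Dl : A -> seq (A * A)) (eps : A -> R).

(* A (x)_R A : right R-action on the first factor k.r = t(r) k,
   left R-action on the second factor r.k = s(r) k. *)
Definition raR (k : A) (r : R) : A := t r * k.
Definition laR (r : R) (k : A) : A := s r * k.
Definition teqR := @teq K A A R raR laR.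

Definition raRop (k : A) (r : R) : A := k * t r.
Definition laRop (r : R) (k : A) : A := t r * k.
Definition teqRop := @teq K A A R raRop laRop.

Definition bal3R := @bal3 K A A A R raR laR raR laR.

Definition is_algmap (f : R -> A) : Prop :=
  [/\ klinear f, forall x y, f (x * y) = f x * f y & f 1 = 1].

Definition is_antialgmap (f : R -> A) : Prop :=
  [/\ klinear f, forall x y, f (x * y) = f y * f x & f 1 = 1].

Record left_bialgebroid : Prop := {
  lb_s : is_algmap s;
  lb_t : is_antialgmap t;
  lb_comm : forall r r', s r * t r' = t r' * s r;
  lb_D_lin : forall a k k', teqR (Dl (a *: k + k')) (tscale a (Dl k) ++ Dl k');
  lb_D_bimod : forall r1 r2 k,
    teqR (Dl (s r1 * t r2 * k)) [seq (s r1 * p.1, t r2 * p.2) | p <- Dl k];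
  lb_e_lin : klinear eps;
  lb_e_bimod : forall r1 r2 k, eps (s r1 * t r2 * k) = r1 * eps k * r2;
  lb_coassoc : forall k f, bal3R f ->
    \sum_(p <- Dl k) \sum_(p' <- Dl p.1) f p'.1 p'.2 p.2 =
    \sum_(p <- Dl k) \sum_(p' <- Dl p.2) f p.1 p'.1 p'.2;
  lb_counit_l : forall k, \sum_(p <- Dl k) s (eps p.1) * p.2 = k;
  lb_counit_r : forall k, \sum_(p <- Dl k) t (eps p.2) * p.1 = k;
  lb_takeuchi : forall k r,
    teqR [seq (p.1 * t r, p.2) | p <- Dl k] [seq (p.1, p.2 * s r) | p <- Dl k];
  lb_D1 : teqR (Dl 1) [:: (1, 1)];
  lb_Dmul : forall k k',
    teqR (Dl (k * k')) [seq (p.1 * p'.1, p.2 * p'.2) | p <- Dl k, p' <- Dl k'];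
  lb_e1 : eps 1 = 1;
  lb_emul : forall k k', eps (k * k') = eps (k * s (eps k'))
}.

Definition nu (w : seq (A * A)) : seq (A * A) :=
  [seq (p'.1, p'.2 * p.2) | p <- w, p' <- Dl p.1].

Definition nu_bijective : Prop :=
  [/\ (forall w w', teqRop w w' -> teqR (nu w) (nu w')),
      (forall w w', teqR (nu w) (nu w') -> teqRop w w') &
      (forall z, exists w, teqR (nu w) z)].

Definition left_xR_Hopf : Prop := left_bialgebroid /\ nu_bijective.

Record right_character (d : A -> R) : Prop := {
  rc_s : forall k r, d (k * s r) = d k * r;
  rc_mul : forall k1 k2, d (k1 * k2) = d (s (d k1) * k2);
  rc_1 : d 1 = 1
}.

Section SAYD.
Variables (M : lmodType K) (act : M -> A -> M) (rho : M -> seq (A * M)).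

Definition laM (r : R) (m : M) : M := act m (t r).
Definition teqM := @teq K A M R raR laM.
Definition bal3M := @bal3 K A A M R raR laR raR laM.

Record SAYD : Prop := {
  sa_act_bilin : kbilinear act;
  sa_act1 : forall m, act m 1 = m;
  sa_actM : forall m k k', act (act m k) k' = act m (k * k');
  sa_rho_lin : forall a m m', teqM (rho (a *: m + m')) (tscale a (rho m) ++ rho m');
  sa_rho_Rlin : forall r m, teqM (rho (laM r m)) [seq (s r * p.1, p.2) | p <- rho m];
  sa_coassoc : forall m f, bal3M f ->
    \sum_(p <- rho m) \sum_(p' <- Dl p.1) f p'.1 p'.2 p.2 =
    \sum_(p <- rho m) \sum_(p' <- rho p.2) f p.1 p'.1 p'.2;
  sa_counit : forall m, \sum_(p <- rho m) laM (eps p.1) p.2 = m;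
  sa_eps : forall m r, \sum_(p <- rho m) laM (eps (p.1 * s r)) p.2 = act m (s r);
  (* anti Yetter-Drinfeld condition, with k^- (x) k^+ = nu^{-1}(k (x) 1) *)
  sa_AYD : forall nuinv : A -> seq (A * A),
    (forall k, teqR (nu (nuinv k)) [:: (k, 1)]) ->
    forall m k,
      teqM (rho (act m k))
        (flatten [seq [seq (p2.2 * pm.1 * p.1, act pm.2 p2.1)
                         | p2 <- nuinv p.2, pm <- rho m] | p <- Dl k]);
  sa_stable : forall m, \sum_(p <- rho m) act p.2 p.1 = m
}.
End SAYD.
End Bialgebroid.

(* Every identity to be proved is either an equation between K-linear maps
   on A or R, or an equality in a balanced tensor product, i.e. an equality
   of the values of every balanced K-valued form; in each case it suffices to
   check it on the monomial bases U^n V^m of A and u^c of R, using only the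
   commutation rule V^m U^a = q^(-ma) U^a V^m. *)
From HB Require Import structures.
From mathcomp Require Import all_boot all_order all_algebra.
From mathcomp Require Import ring.
From Stdlib Require Import ClassicalEpsilon.
Import GRing.Theory.
Set Implicit Arguments.
Unset Strict Implicit.
Unset Printing Implicit Defensive.
Local Open Scope ring_scope.

Section LinearMaps.
Variables (K : fieldType) (V W Z : lmodType K).

Lemma klin0 (f : V -> W) : klinear f -> f 0 = 0.
Proof.
move=> hf; have := hf 1 0 0; rewrite scale1r addr0 scale1r => e.
by apply: (addrI (f 0)); rewrite addr0 -e.
Qed.

Lemma klinD (f : V -> W) : klinear f -> forall x y, f (x + y) = f x + f y.
Proof. by move=> hf x y; have := hf 1 x y; rewrite !scale1r. Qed.

Lemma klinZ (f : V -> W) : klinear f -> forall a x, f (a *: x) = a *: f x.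
Proof. by move=> hf a x; rewrite -[a *: x]addr0 hf klin0 // addr0. Qed.

Lemma klin_sum (f : V -> W) : klinear f ->
  forall (I : Type) (r : seq I) (F : I -> V),
  f (\sum_(i <- r) F i) = \sum_(i <- r) f (F i).
Proof.
move=> hf I r F; elim: r => [|x r IH]; first by rewrite !big_nil klin0.
by rewrite !big_cons klinD // IH.
Qed.

Lemma klin_comp (f : W -> Z) (h : V -> W) :
  klinear f -> klinear h -> klinear (fun x => f (h x)).
Proof. by move=> hf hh a x y; rewrite hh hf. Qed.
End LinearMaps.

Definition linform (K : fieldType) (V : lmodType K) (f : V -> K) : Prop :=
  forall a x y, f (a *: x + y) = a * f x + f y.

Section LinearForms.
Variables (K : fieldType) (V W : lmodType K).
Implicit Types f g : V -> K.

Lemma linformD f : linform f -> forall x y, f (x + y) = f x + f y.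
Proof. move=> h; exact: (@klinD K V K^o f h). Qed.
Lemma linformZ f : linform f -> forall a x, f (a *: x) = a * f x.
Proof. move=> h; exact: (@klinZ K V K^o f h). Qed.
Lemma linformN f : linform f -> forall x, f (- x) = - f x.
Proof. by move=> h x; rewrite -scaleN1r linformZ // mulN1r. Qed.
Lemma linform_sum f : linform f -> forall (I : Type) (r : seq I) (F : I -> V),
  f (\sum_(i <- r) F i) = \sum_(i <- r) f (F i).
Proof. move=> h; exact: (@klin_sum K V K^o f h). Qed.

Lemma linform_comp (f : W -> K) (h : V -> W) :
  linform f -> klinear h -> linform (fun x => f (h x)).
Proof. by move=> hf hh a x y; rewrite hh hf. Qed.

Lemma linform_add f g : linform f -> linform g -> linform (fun x => f x + g x).
Proof. by move=> hf hg a x y; rewrite hf hg mulrDr addrACA. Qed.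

Lemma linform_scale f c : linform f -> linform (fun x => c * f x).
Proof. by move=> hf a x y; rewrite hf mulrDr !mulrA [c * a]mulrC. Qed.
End LinearForms.

Section Basis.
Variables (K : fieldType) (V : lmodType K) (I : eqType) (b : I -> V).

Section Span.
Hypothesis hspan : forall v : V,
  exists (S : seq I) (c : I -> K), v = \sum_(i <- S) c i *: b i.

Lemma ext_on_span (W : lmodType K) (f1 f2 : V -> W) : klinear f1 -> klinear f2 ->
  (forall i, f1 (b i) = f2 (b i)) -> forall v, f1 v = f2 v.
Proof.
move=> h1 h2 hb v; have [S [c ->]] := hspan v.
by rewrite !klin_sum //; apply: eq_bigr => i _; rewrite !klinZ // hb.
Qed.

Lemma ext_on_spanK (f1 f2 : V -> K) : linform f1 -> linform f2 ->
  (forall i, f1 (b i) = f2 (b i)) -> forall v, f1 v = f2 v.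
Proof. exact: (@ext_on_span K^o). Qed.
End Span.

Lemma sum_widen (W : zmodType) (S T : seq I) (G : I -> W) : uniq S -> uniq T ->
  {subset S <= T} ->
  \sum_(i <- S) G i = \sum_(i <- T) (if i \in S then G i else 0).
Proof.
move=> uS uT sST; rewrite -big_mkcond /= -[in RHS]big_filter.
apply: perm_big; apply: uniq_perm => //; first exact: filter_uniq.
by move=> i; rewrite mem_filter; case iS: (i \in S) => //=; rewrite sST.
Qed.

Lemma common_support (S1 S2 : seq I) :
  {T | [/\ uniq T, {subset S1 <= T} & {subset S2 <= T}]}.
Proof.
exists (undup (S1 ++ S2)); split; first exact: undup_uniq.
- by move=> x xS; rewrite mem_undup mem_cat xS.
- by move=> x xS; rewrite mem_undup mem_cat xS orbT.
Qed.

Lemma sum_pred1_uniq (W : zmodType) (S : seq I) (j : I) (F : I -> W) :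
  uniq S -> j \in S -> \sum_(i <- S | i == j) F i = F j.
Proof.
move=> uS jS; rewrite -big_filter (filter_pred1_uniq uS jS).
by rewrite big_seq1.
Qed.

Hypothesis hb : is_basis b.

Lemma uniq_decomposition v : exists (S : seq I) (c : I -> K),
  uniq S /\ v = \sum_(i <- S) c i *: b i.
Proof.
have [S [c ->]] := hb.1 v; elim: S => [|j S IH].
  by exists [::], c; rewrite !big_nil.
rewrite big_cons; have [S' [c' [uS' ->]]] := IH; case jS: (j \in S').
  exists S', (fun i => c' i + (if i == j then c j else 0)); split => //.
  rewrite [RHS](eq_bigr (fun i => c' i *: b i +
                                  (if i == j then c j *: b j else 0))); last first.
    by move=> i _; rewrite scalerDl; case: eqP => [->|]; rewrite ?scale0r.
  by rewrite big_split /= -big_mkcond /= sum_pred1_uniq // addrC.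
exists (j :: S'), (fun i => if i == j then c j else c' i).
split; first by rewrite /= jS.
rewrite big_cons eqxx; congr (_ + _); apply: eq_big_seq => i iS.
by case: eqP => // eij; rewrite -eij iS in jS.
Qed.

Definition coef_on (S : seq I) (c : I -> K) i := if i \in S then c i else 0.

Lemma sum_coef_on S T c (F : I -> K) : uniq S -> uniq T -> {subset S <= T} ->
  \sum_(i <- S) c i * F i = \sum_(i <- T) coef_on S c i * F i.
Proof.
move=> uS uT sST; rewrite (sum_widen _ uS uT sST); apply: eq_bigr => i _.
by rewrite /coef_on; case: (i \in S); rewrite ?mul0r.
Qed.

Lemma coef_on_unique S c S' c' : uniq S -> uniq S' ->
  \sum_(i <- S) c i *: b i = \sum_(i <- S') c' i *: b i ->
  forall i, coef_on S c i = coef_on S' c' i.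
Proof.
move=> uS uS' he i.
have [T [uT sS sS']] := common_support S S'.
have widen S0 c0 : uniq S0 -> {subset S0 <= T} ->
    \sum_(j <- S0) c0 j *: b j = \sum_(j <- T) coef_on S0 c0 j *: b j.
  move=> u0 s0; rewrite (sum_widen _ u0 uT s0); apply: eq_bigr => j _.
  by rewrite /coef_on; case: (j \in S0); rewrite ?scale0r.
have h0 : \sum_(j <- T) (coef_on S c j - coef_on S' c' j) *: b j = 0.
  under eq_bigr do rewrite scalerBl.
  by rewrite sumrB -widen // -widen // he subrr.
case iT: (i \in T); last first.
  rewrite /coef_on; case iS: (i \in S); first by rewrite sS in iT.
  by case iS': (i \in S') => //; rewrite sS' in iT.
by apply/eqP; rewrite -subr_eq0; apply/eqP; apply: (hb.2 T _ uT h0).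
Qed.

Definition decomposition (v : V) : seq I * (I -> K) :=
  let H := constructive_indefinite_description _ (uniq_decomposition v) in
  (proj1_sig H, proj1_sig (constructive_indefinite_description _ (proj2_sig H))).

Lemma decompositionP v : uniq (decomposition v).1 /\
  v = \sum_(i <- (decomposition v).1) (decomposition v).2 i *: b i.
Proof.
rewrite /decomposition; case: (constructive_indefinite_description _ _) => S /= H.
by case: (constructive_indefinite_description _ _).
Qed.

Definition linext (phi : I -> K) (v : V) : K :=
  \sum_(i <- (decomposition v).1) (decomposition v).2 i * phi i.

Lemma linextE phi S c : uniq S ->
  linext phi (\sum_(i <- S) c i *: b i) = \sum_(i <- S) c i * phi i.
Proof.
move=> uS; rewrite /linext; set v := \sum_(i <- S) _.
have [u1 e1] := decompositionP v.
set S1 := (decomposition v).1 in u1 e1 *; set c1 := (decomposition v).2 in e1 *.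
have [T [uT sS1 sS]] := common_support S1 S.
rewrite (sum_coef_on c1 phi u1 uT sS1) (sum_coef_on c phi uS uT sS).
by apply: eq_bigr => i _; rewrite (coef_on_unique u1 uS (esym e1)).
Qed.

Lemma linext_basis phi i : linext phi (b i) = phi i.
Proof.
have -> : b i = \sum_(j <- [:: i]) 1 *: b j by rewrite big_seq1 scale1r.
by rewrite linextE // big_seq1 mul1r.
Qed.

Lemma linext_linform phi : linform (linext phi).
Proof.
move=> a x y.
have [u1 e1] := decompositionP x.
set S1 := (decomposition x).1 in u1 e1 *; set c1 := (decomposition x).2 in e1 *.
have [u2 e2] := decompositionP y.
set S2 := (decomposition y).1 in u2 e2 *; set c2 := (decomposition y).2 in e2 *.
have [T [uT sS1 sS2]] := common_support S1 S2.
have widen S0 c0 : uniq S0 -> {subset S0 <= T} ->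
    \sum_(j <- S0) c0 j *: b j = \sum_(j <- T) coef_on S0 c0 j *: b j.
  move=> u0 s0; rewrite (sum_widen _ u0 uT s0); apply: eq_bigr => j _.
  by rewrite /coef_on; case: (j \in S0); rewrite ?scale0r.
rewrite e1 e2 (widen S1 c1) // (widen S2 c2) // scaler_sumr -big_split /=.
under eq_bigr do rewrite scalerA -scalerDl.
rewrite !linextE // mulr_sumr -big_split /=; apply: eq_bigr => i _.
by rewrite mulrDl mulrA.
Qed.

Lemma linform_separate (v w : V) :
  (forall F : V -> K, linform F -> F v = F w) -> v = w.
Proof.
move=> hF; apply/eqP; rewrite -subr_eq0; apply/eqP.
have [u1 e1] := decompositionP (v - w).
set S1 := (decomposition _).1 in u1 e1 *; set c1 := (decomposition _).2 in e1 *.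
have hc i : i \in S1 -> c1 i = 0.
  move=> iS; have := hF (linext (fun j => (j == i)%:R)) (linext_linform _).
  move/eqP; rewrite -subr_eq0 -(linformN (linext_linform _)).
  rewrite -(linformD (linext_linform _)) e1 linextE //.
  rewrite (eq_bigr (fun j => if j == i then c1 j else 0)).
    by rewrite -big_mkcond /= sum_pred1_uniq // => /eqP.
  by move=> j _; case: eqP; rewrite ?mulr1 ?mulr0.
by rewrite e1 big1_seq // => i /andP [_ iS]; rewrite hc // scale0r.
Qed.
End Basis.


Section BalancedForms.
Variables (K : fieldType) (X Y : lmodType K) (Rr : Type).
Variables (ra : X -> Rr -> X) (la : Rr -> Y -> Y).
Implicit Types f : X -> Y -> K.

Lemma bal2_intro f : (forall y, linform (fun x => f x y)) ->
  (forall x, linform (fun y => f x y)) ->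
  (forall x r y, f (ra x r) y = f x (la r y)) -> bal2 ra la f.
Proof. by move=> h1 h2 h3; split => *; rewrite ?h1 ?h2 ?h3. Qed.

Lemma bal2_l f : bal2 ra la f -> forall y, linform (fun x => f x y).
Proof. by case=> h1 _ _ y a x1 x2; rewrite h1. Qed.
Lemma bal2_r f : bal2 ra la f -> forall x, linform (fun y => f x y).
Proof. by case=> _ h2 _ x a x1 x2; rewrite h2. Qed.

Lemma teval_cat f w1 w2 : teval f (w1 ++ w2) = teval f w1 + teval f w2.
Proof. by rewrite /teval big_cat. Qed.

Lemma teval_tscale f a w : bal2 ra la f -> teval f (tscale a w) = a * teval f w.
Proof.
move=> hf; rewrite /teval /tscale big_map mulr_sumr; apply: eq_bigr => p _ /=.
by rewrite (linformZ (bal2_l hf p.2)).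
Qed.

Lemma teval_map f (h1 : X -> X) (h2 : Y -> Y) w :
  teval f [seq (h1 p.1, h2 p.2) | p <- w] = teval (fun x y => f (h1 x) (h2 y)) w.
Proof. by rewrite /teval big_map. Qed.

Lemma teval_seq1 f x y : teval f [:: (x, y)] = f x y.
Proof. by rewrite /teval big_seq1. Qed.

Lemma teval_ext f1 f2 w : (forall x y, f1 x y = f2 x y) -> teval f1 w = teval f2 w.
Proof. by move=> h; apply: eq_bigr => p _; rewrite h. Qed.

Lemma teval_comb f1 f2 c w :
  teval (fun x y => c * f1 x y + f2 x y) w = c * teval f1 w + teval f2 w.
Proof. by rewrite /teval big_split /= mulr_sumr. Qed.
End BalancedForms.

Section IntegerPowers.
Variables (K : fieldType) (A : unitAlgType K).

Lemma exprzZ (k : K) (x : A) (n : int) : k \is a GRing.unit ->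
  x \is a GRing.unit -> (k *: x) ^ n = k ^ n *: x ^ n.
Proof.
move=> hk hx; case: n => n; first exact: exprZn.
by rewrite /exprz exprZn invrZ ?unitrX.
Qed.

Lemma conjXn (x y : A) (n : nat) : x \is a GRing.unit ->
  (x * y * x^-1) ^+ n = x * y ^+ n * x^-1.
Proof.
move=> hx; elim: n => [|n IH]; first by rewrite !expr0 mulr1 mulrV.
by rewrite exprS IH !mulrA mulrVK // exprS !mulrA.
Qed.

Lemma conjXz (x y : A) (n : int) : x \is a GRing.unit -> y \is a GRing.unit ->
  (x * y * x^-1) ^ n = x * y ^ n * x^-1.
Proof.
move=> hx hy; case: n => n; first exact: conjXn.
rewrite /exprz conjXn // !invrM ?unitrV ?unitrX ?unitrMl ?unitrX //.
by rewrite invrK mulrA.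
Qed.
End IntegerPowers.

Section AlgebraMultiplication.
Variables (K : fieldType) (A : algType K).

Lemma mull_klinear (x : A) : klinear (fun y : A => x * y).
Proof. by move=> a y z; rewrite mulrDr scalerAr. Qed.
Lemma mulr_klinear (x : A) : klinear (fun y : A => y * x).
Proof. by move=> a y z; rewrite mulrDl scalerAl. Qed.
End AlgebraMultiplication.

Section QuantumTorus.
Variables (K : fieldType) (q : K) (A : unitAlgType K) (U V : A).
Hypotheses (hq : q != 0) (hU : U \is a GRing.unit) (hV : V \is a GRing.unit)
  (hUV : U * V = q *: (V * U)).

Definition mono (nm : int * int) : A := U ^ nm.1 * V ^ nm.2.

Lemma q_unit : q \is a GRing.unit. Proof. by rewrite unitfE. Qed.

Lemma qXD (a b : int) : q ^ (a + b) = q ^ a * q ^ b.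
Proof. exact: (exprzDr q_unit). Qed.

Lemma qXN (a : int) : q ^ a * q ^ (- a) = 1.
Proof. by rewrite -qXD addrN expr0z. Qed.

Lemma conjV_U : V * U * V^-1 = q^-1 *: U.
Proof.
apply: (mulIr hV); rewrite mulrVK // -scalerAl; apply: (scalerI hq).
by rewrite scalerA mulfV // scale1r hUV.
Qed.

Lemma V_Upow (a : int) : V * U ^ a = q ^ (- a) *: (U ^ a * V).
Proof.
have := conjXz a hV hU; rewrite conjV_U exprzZ ?unitfE ?invr_eq0 // => e.
rewrite exprz_inv in e.
by rewrite -[V * U ^ a](mulrVK hV) -e -scalerAl.
Qed.

Lemma Vpow_Upow (m a : int) : V ^ m * U ^ a = q ^ (- (m * a)) *: (U ^ a * V ^ m).
Proof.
set W := U ^ a; have hW : W \is a GRing.unit by exact: unitrXz.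
have e1 : W^-1 * V * W = q ^ (- a) *: V.
  by rewrite -mulrA V_Upow -scalerAr mulKr.
have hW' : W^-1 \is a GRing.unit by rewrite unitrV.
have := conjXz m hW' hV; rewrite invrK e1 exprzZ ?unitfE ?expfz_neq0 // => e.
rewrite exprz_exp (_ : - a * m = - (m * a)) in e; last by rewrite mulNr mulrC.
by rewrite -[V ^ m * W](mulVKr hW) [W^-1 * _]mulrA -e -scalerAr.
Qed.

Lemma mono_mul n m a b :
  mono (n, m) * mono (a, b) = q ^ (- (m * a)) *: mono (n + a, m + b).
Proof.
rewrite /mono /= mulrA -[U ^ n * V ^ m * U ^ a]mulrA Vpow_Upow.
by rewrite -scalerAr -scalerAl !mulrA -exprzDr // -mulrA -exprzDr.
Qed.

Lemma Upow_mono c n m : U ^ c * mono (n, m) = mono (c + n, m).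
Proof. by rewrite /mono /= mulrA -exprzDr. Qed.

Lemma mono_Upow n m c : mono (n, m) * U ^ c = q ^ (- (m * c)) *: mono (n + c, m).
Proof. by rewrite /mono /= -mulrA Vpow_Upow -scalerAr mulrA -exprzDr. Qed.

Lemma mono00 : mono (0, 0) = 1. Proof. by rewrite /mono /= !expr0z mulr1. Qed.
Lemma mono0m m : mono (0, m) = V ^ m. Proof. by rewrite /mono /= expr0z mul1r. Qed.
Lemma monon0 n : mono (n, 0) = U ^ n. Proof. by rewrite /mono /= expr0z mulr1. Qed.

Hypothesis hA : is_basis mono.

Lemma extA (W : lmodType K) (f1 f2 : A -> W) : klinear f1 -> klinear f2 ->
  (forall i, f1 (mono i) = f2 (mono i)) -> forall k, f1 k = f2 k.
Proof. exact: (ext_on_span hA.1). Qed.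

Lemma extAK (f1 f2 : A -> K) : linform f1 -> linform f2 ->
  (forall i, f1 (mono i) = f2 (mono i)) -> forall k, f1 k = f2 k.
Proof. exact: (ext_on_spanK hA.1). Qed.

Section BaseAlgebra.
Variables (R : unitAlgType K) (u : R) (s : R -> A).
Hypotheses (hu : u \is a GRing.unit) (hR : is_basis (fun n : int => u ^ n))
  (hs : is_algmap s) (hsu : s u = U).

Lemma extR (W : lmodType K) (f1 f2 : R -> W) : klinear f1 -> klinear f2 ->
  (forall c, f1 (u ^ c) = f2 (u ^ c)) -> forall r, f1 r = f2 r.
Proof. exact: (ext_on_span hR.1). Qed.

Lemma extRK (f1 f2 : R -> K) : linform f1 -> linform f2 ->
  (forall c, f1 (u ^ c) = f2 (u ^ c)) -> forall r, f1 r = f2 r.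
Proof. exact: (ext_on_spanK hR.1). Qed.

Lemma s_klin : klinear s. Proof. by case: hs. Qed.
Lemma sM x y : s (x * y) = s x * s y. Proof. by case: hs. Qed.
Lemma s1 : s 1 = 1. Proof. by case: hs. Qed.

Lemma sV x : x \is a GRing.unit -> s (x^-1) = (s x)^-1.
Proof.
move=> hx; have hsx : s x * s (x^-1) = 1 by rewrite -sM mulrV // s1.
have ux : s x \is a GRing.unit.
  by apply/unitrP; exists (s x^-1); split => //; rewrite -sM mulVr // s1.
by rewrite -[LHS]mul1r -(mulVr ux) -mulrA hsx mulr1.
Qed.

Lemma s_upow (n : int) : s (u ^ n) = U ^ n.
Proof.
have sX x (k : nat) : s (x ^+ k) = s x ^+ k.
  by elim: k => [|k IH]; rewrite ?expr0 ?s1 // !exprS sM IH.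
case: n => n; first by rewrite /= sX hsu.
by rewrite /exprz sV ?unitrX // sX hsu.
Qed.

(* R is commutative, being spanned by the powers of a single element. *)
Lemma R_comm (x y : R) : x * y = y * x.
Proof.
move: x; apply: (extR (mulr_klinear _) (mull_klinear _)) => i.
move: y; apply: (extR (mull_klinear _) (mulr_klinear _)) => j.
by rewrite -!exprzDr // addrC.
Qed.

Lemma s_comm x y : s x * s y = s y * s x.
Proof. by rewrite -!sM R_comm. Qed.

(* Balanced forms on A (x)_R A and on A (x)_{R^op} A (here t = s). *)
Definition balR (g : A -> A -> K) := bal2 (raR s) (laR s) g.
Definition balRop (g : A -> A -> K) := bal2 (raRop s) (laRop s) g.

Lemma balR_b g : balR g -> forall r x y, g (s r * x) y = g x (s r * y).
Proof. by move=> hg r x y; case: hg => _ _; apply. Qed.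

Lemma balRop_b g : balRop g -> forall r x y, g (x * s r) y = g x (s r * y).
Proof. by move=> hg r x y; case: hg => _ _; apply. Qed.

Lemma balZl g : balR g -> forall a x y, g (a *: x) y = a * g x y.
Proof. by move=> hg a x y; rewrite (linformZ (bal2_l hg y)). Qed.
Lemma balZr g : balR g -> forall a x y, g x (a *: y) = a * g x y.
Proof. by move=> hg a x y; rewrite (linformZ (bal2_r hg x)). Qed.

Lemma balR_intro (g : A -> A -> K) : (forall y, linform (fun x => g x y)) ->
  (forall x, linform (fun y => g x y)) ->
  (forall c x y, g (U ^ c * x) y = g x (U ^ c * y)) -> balR g.
Proof.
move=> h1 h2 h3; apply: bal2_intro => // x r y; rewrite /raR /laR; move: r.
apply: extRK => [||c]; last by rewrite s_upow h3.
- exact: (linform_comp (h1 y) (klin_comp (mulr_klinear x) s_klin)).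
- exact: (linform_comp (h2 x) (klin_comp (mulr_klinear y) s_klin)).
Qed.

Lemma balRop_intro (g : A -> A -> K) : (forall y, linform (fun x => g x y)) ->
  (forall x, linform (fun y => g x y)) ->
  (forall c x y, g (x * U ^ c) y = g x (U ^ c * y)) -> balRop g.
Proof.
move=> h1 h2 h3; apply: bal2_intro => // x r y; rewrite /raRop /laRop; move: r.
apply: extRK => [||c]; last by rewrite s_upow h3.
- exact: (linform_comp (h1 y) (klin_comp (mull_klinear x) s_klin)).
- exact: (linform_comp (h2 x) (klin_comp (mulr_klinear y) s_klin)).
Qed.

Lemma balR_mulr g a b : balR g -> balR (fun x y => g (x * a) (y * b)).
Proof.
move=> hg; apply: bal2_intro => [y|x|x r y].
- exact: (linform_comp (bal2_l hg _) (mulr_klinear a)).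
- exact: (linform_comp (bal2_r hg _) (mulr_klinear b)).
- by rewrite /raR /laR -mulrA balR_b // mulrA.
Qed.

Lemma balR_mulr2 g b : balR g -> balR (fun x y => g x (y * b)).
Proof.
move=> hg; apply: bal2_intro => [y|x|x r y].
- exact: (bal2_l hg _).
- exact: (linform_comp (bal2_r hg _) (mulr_klinear b)).
- by rewrite /raR /laR balR_b // mulrA.
Qed.

Section Coproduct.
Variables (Dl : A -> seq (A * A)).
Hypotheses
  (hDl : forall a k k', teqR s s (Dl (a *: k + k')) (tscale a (Dl k) ++ Dl k'))
  (hDlB : forall n m : int,
      teqR s s (Dl (U ^ n * V ^ m)) [:: (U ^ n * V ^ m, V ^ m)]).

Definition evD (g : A -> A -> K) (k : A) : K := teval g (Dl k).

Lemma evD_linform g : balR g -> linform (evD g).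
Proof.
by move=> hg a x y; rewrite /evD (hDl a x y hg) teval_cat (teval_tscale _ _ hg).
Qed.

Lemma evD_mono g i : balR g -> evD g (mono i) = g (mono i) (V ^ i.2).
Proof. by case: i => n m hg; rewrite /evD (hDlB n m hg) teval_seq1. Qed.

Lemma evD_ext g1 g2 : balR g1 -> balR g2 ->
  (forall i, g1 (mono i) (V ^ i.2) = g2 (mono i) (V ^ i.2)) ->
  forall k, evD g1 k = evD g2 k.
Proof.
move=> h1 h2 e; apply: extAK; [exact: evD_linform|exact: evD_linform|].
by move=> i; rewrite !evD_mono.
Qed.

Lemma evD_s_mono g r i : balR g ->
  evD g (s r * mono i) = g (s r * mono i) (V ^ i.2).
Proof.
move=> hg; case: i => n m /=; move: r; apply: extRK => [||c].
- exact: (linform_comp (evD_linform hg) (klin_comp (mulr_klinear _) s_klin)).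
- exact: (linform_comp (bal2_l hg _) (klin_comp (mulr_klinear _) s_klin)).
- by rewrite s_upow Upow_mono (evD_mono (_, _) hg).
Qed.

Lemma D_bimod r1 r2 k :
  teqR s s (Dl (s r1 * s r2 * k)) [seq (s r1 * p.1, s r2 * p.2) | p <- Dl k].
Proof.
move=> g hg; rewrite teval_map.
have hg' : balR (fun x y => g (s r1 * x) (s r2 * y)).
  apply: bal2_intro => [y|x|x r y].
  - exact: (linform_comp (bal2_l hg _) (mull_klinear _)).
  - exact: (linform_comp (bal2_r hg _) (mull_klinear _)).
  - by rewrite /raR /laR mulrA s_comm -mulrA balR_b // mulrA s_comm -mulrA.
change (evD g (s r1 * s r2 * k) = evD (fun x y => g (s r1 * x) (s r2 * y)) k).
move: k; apply: extAK => [||i].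
- exact: (linform_comp (evD_linform hg) (mull_klinear _)).
- exact: evD_linform.
- by rewrite evD_mono // -sM evD_s_mono // sM -balR_b // mulrA s_comm.
Qed.

Lemma evD_sl h r x : balR h -> evD h (s r * x) = evD (fun a b => h a (s r * b)) x.
Proof.
move=> hh; have := D_bimod 1 r x hh; rewrite s1 !mul1r /evD => ->.
by rewrite teval_map; apply: teval_ext => a b; rewrite mul1r.
Qed.

Lemma evD_sr h r x : balR h -> evD h (s r * x) = evD (fun a b => h (s r * a) b) x.
Proof.
move=> hh; have := D_bimod r 1 x hh; rewrite s1 !mulr1 /evD => ->.
by rewrite teval_map; apply: teval_ext => a b; rewrite mul1r.
Qed.

(* The Takeuchi condition: on a monomial it amounts to moving U^c across
   (x)_R after commuting it past V^m. *)
Lemma takeuchi k r :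
  teqR s s [seq (p.1 * s r, p.2) | p <- Dl k] [seq (p.1, p.2 * s r) | p <- Dl k].
Proof.
move=> g hg.
rewrite (teval_map _ (fun x => x * s r) (fun y => y))
        (teval_map _ (fun x => x) (fun y => y * s r)).
have h1 : balR (fun x y => g (x * s r) y).
  apply: bal2_intro => [y|x|x r' y].
  - exact: (linform_comp (bal2_l hg y) (mulr_klinear _)).
  - exact: (bal2_r hg).
  - by rewrite /raR /laR -mulrA balR_b.
change (evD (fun x y => g (x * s r) y) k = evD (fun x y => g x (y * s r)) k).
apply: evD_ext => [||[n m]]; [exact: h1|exact: balR_mulr2|clear h1].
rewrite /=; move: r; apply: extRK => [||c].
- exact: (linform_comp (bal2_l hg _) (klin_comp (mull_klinear _) s_klin)).
- exact: (linform_comp (bal2_r hg _) (klin_comp (mull_klinear _) s_klin)).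
- rewrite s_upow mono_Upow Vpow_Upow // !balZl ?balZr //.
  by rewrite -s_upow -balR_b // s_upow Upow_mono addrC.
Qed.

Lemma D1 : teqR s s (Dl 1) [:: (1, 1)].
Proof. by move=> g hg; have := hDlB 0 0 hg; rewrite !expr0z mulr1. Qed.

Lemma evD_mulr_bal g k : balR g ->
  balR (fun a b => evD (fun x y => g (x * a) (y * b)) k).
Proof.
move=> hg; apply: balR_intro => [b|a|c a b].
- move=> d x1 x2; rewrite /evD -teval_comb; apply: teval_ext => x y.
  by rewrite mulrDr -scalerAr (linformD (bal2_l hg _)) balZl.
- move=> d y1 y2; rewrite /evD -teval_comb; apply: teval_ext => x y.
  by rewrite mulrDr -scalerAr (linformD (bal2_r hg _)) balZr.
apply: evD_ext => [||[n m]]; try exact: balR_mulr.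
rewrite /= mulrA mono_Upow mulrA Vpow_Upow // -!scalerAl.
rewrite balZl ?balZr //; congr (_ * _).
by rewrite -[U ^ c * V ^ m * b]mulrA -[U ^ c]s_upow -(balR_b hg) s_upow mulrA
  Upow_mono addrC.
Qed.

Lemma Dmul k k' :
  teqR s s (Dl (k * k')) [seq (p.1 * p'.1, p.2 * p'.2) | p <- Dl k, p' <- Dl k'].
Proof.
move=> g hg; rewrite /teval big_allpairs_dep /= exchange_big /=.
change (evD g (k * k') = evD (fun a b => evD (fun x y => g (x * a) (y * b)) k) k').
move: k'; apply: extAK => [||[a b]].
- exact: (linform_comp (evD_linform hg) (mull_klinear _)).
- exact: (evD_linform (evD_mulr_bal k hg)).
rewrite (evD_mono _ (evD_mulr_bal k hg)); move: k; apply: extAK => [||[n m]].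
- exact: (linform_comp (evD_linform hg) (mulr_klinear _)).
- exact: (evD_linform (balR_mulr _ _ hg)).
rewrite (evD_mono (_, _) (balR_mulr _ _ hg)) /=.
by rewrite mono_mul (linformZ (evD_linform hg)) evD_mono // balZl
  // -exprzDr.
Qed.

(* Coassociativity: on U^n V^m both sides equal f(U^n V^m, V^m, V^m). *)
Lemma coassoc k f : bal3R s s f ->
    \sum_(p <- Dl k) \sum_(p' <- Dl p.1) f p'.1 p'.2 p.2 =
    \sum_(p <- Dl k) \sum_(p' <- Dl p.2) f p.1 p'.1 p'.2.
Proof.
case=> l1 l2 l3 b1 b2.
have hf12 y : balR (fun a b => f a b y).
  by apply: bal2_intro => [b|a|a r b] // d x1 x2; rewrite ?l1 ?l2.
have hf23 x : balR (fun a b => f x a b).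
  by apply: bal2_intro => [b|a|a r b] // d x1 x2; rewrite ?l2 ?l3.
have hG1 : balR (fun x y => evD (fun a b => f a b y) x).
  apply: bal2_intro => [y|x|x r y]; first exact: evD_linform.
  - by move=> d y1 y2; rewrite /evD -teval_comb; apply: teval_ext => a b; apply: l3.
  - by rewrite /raR /laR evD_sl //; apply: teval_ext => a b; apply: b2.
have hG2 : balR (fun x y => evD (fun a b => f x a b) y).
  apply: bal2_intro => [y|x|x r y].
  - by move=> d x1 x2; rewrite /evD -teval_comb; apply: teval_ext => a b; apply: l1.
  - exact: evD_linform.
  - by rewrite /raR /laR evD_sr //; apply: teval_ext => a b; apply: b1.
change (evD (fun x y => evD (fun a b => f a b y) x) k =
        evD (fun x y => evD (fun a b => f x a b) y) k).
apply: evD_ext => // [[n m]].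
by rewrite /= (evD_mono (_, _)) // -mono0m (evD_mono (_, _)) // mono0m.
Qed.

Section GaloisMap.

(* The form g o nu on an elementary tensor x (x)_{R^op} y. *)
Definition nuform (g : A -> A -> K) (x y : A) : K := evD (fun a b => g a (b * y)) x.

Lemma teval_nu g w : teval g (nu Dl w) = teval (nuform g) w.
Proof. by rewrite /teval /nu big_allpairs_dep. Qed.

Lemma nuform_bal g : balR g -> balRop (nuform g).
Proof.
move=> hg; apply: balRop_intro => [y|x|c x y].
- exact: (evD_linform (balR_mulr2 y hg)).
- move=> d y1 y2; rewrite /nuform /evD -teval_comb; apply: teval_ext => a b.
  by rewrite mulrDr -scalerAr (linformD (bal2_r hg _)) balZr.
move: x; apply: extAK => [||[n m]].
- exact: (linform_comp (evD_linform (balR_mulr2 y hg)) (mulr_klinear _)).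
- exact: (evD_linform (balR_mulr2 _ hg)).
rewrite /nuform mono_Upow (linformZ (evD_linform (balR_mulr2 y hg))).
rewrite !(evD_mono (_, _) (balR_mulr2 _ hg)) /= mulrA Vpow_Upow -!scalerAl.
rewrite balZr //; congr (_ * _).
by rewrite -mulrA -[U ^ c]s_upow -(balR_b hg) s_upow Upow_mono addrC.
Qed.

(* Pulling a balanced form h on A (x)_{R^op} A back along nu^-1, where
   nu^-1 (U^n V^m (x)_R y) = U^n V^m (x)_{R^op} V^-m y. *)
Section Pullback.
Variable h : A -> A -> K.
Hypothesis hh : balRop h.

Definition pullback (x y : A) : K := linext hA (fun i => h (mono i) (V ^ (- i.2) * y)) x.

Lemma pullback_mono i y : pullback (mono i) y = h (mono i) (V ^ (- i.2) * y).
Proof. exact: (linext_basis hA). Qed.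

Lemma pullback_l y : linform (fun x => pullback x y).
Proof. exact: linext_linform. Qed.

Lemma pullback_bal : balR pullback.
Proof.
apply: balR_intro => [y|x|c x y]; first exact: pullback_l.
- move=> d y1 y2; move: x; apply: extAK => [||i].
  + exact: pullback_l.
  + by apply: linform_add; [apply: linform_scale|]; apply: pullback_l.
  + rewrite !pullback_mono mulrDr -scalerAr.
    by rewrite (linformD (bal2_r hh _)) (linformZ (bal2_r hh _)).
move: x; apply: extAK => [||[n m]].
- exact: (linform_comp (pullback_l y) (mull_klinear _)).
- exact: pullback_l.
rewrite Upow_mono !pullback_mono /= mulrA Vpow_Upow -scalerAl.
rewrite (linformZ (bal2_r hh _)) -mulrA -[U ^ c]s_upow -(balRop_b hh) s_upow.
by rewrite mono_Upow (linformZ (bal2_l hh _)) mulrA mulNr opprK qXN mul1r addrC.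
Qed.

Lemma pullback_nu w : teval pullback (nu Dl w) = teval h w.
Proof.
rewrite teval_nu; apply: teval_ext => x y; move: x.
apply: extAK => [||[n m]]; [exact: (evD_linform (balR_mulr2 y pullback_bal))|
                             exact: (bal2_l hh _)|].
rewrite /nuform (evD_mono (_, _) (balR_mulr2 _ pullback_bal)) pullback_mono /=.
by rewrite mulrA -exprzDr // addNr expr0z mul1r.
Qed.
End Pullback.

(* nu is well defined by [nuform_bal], injective by [pullback_nu], and
   surjective since nu(U^n V^m (x) V^-m y) = U^n V^m (x)_R y. *)
Theorem nu_bij : nu_bijective s s Dl.
Proof.
split.
- move=> w w' e g hg; rewrite !teval_nu; apply: e; exact: nuform_bal.
- move=> w w' e h hh; rewrite -!(pullback_nu hh); apply: e; exact: pullback_bal.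
elim=> [|[x y] z [w' IH]]; first by exists [::].
have [S [c ex]] := hA.1 x.
exists ([seq (c i *: mono i, V ^ (- i.2) * y) | i <- S] ++ w') => g hg.
rewrite teval_nu teval_cat -[teval (nuform g) w']teval_nu (IH g hg).
rewrite /teval big_cons /=; congr (_ + _).
rewrite big_map ex (linform_sum (bal2_l hg y)); apply: eq_bigr => i _ /=.
rewrite /nuform (linformZ (evD_linform (balR_mulr2 _ hg))).
rewrite (evD_mono _ (balR_mulr2 _ hg)) balZl //.
by rewrite mulrA -exprzDr // addrN expr0z mul1r.
Qed.
End GaloisMap.

Section Counit.
Variables (eps : A -> R).
Hypotheses (heps : klinear eps) (hepsB : forall n m : int, eps (U ^ n * V ^ m) = u ^ n).

Lemma eps_s_mono r i : eps (s r * mono i) = r * u ^ i.1.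
Proof.
move: r; apply: extR => [||c].
- exact: (klin_comp heps (klin_comp (mulr_klinear _) s_klin)).
- exact: mulr_klinear.
- by case: i => n m; rewrite s_upow Upow_mono hepsB exprzDr.
Qed.

Lemma eps_bimod r1 r2 k : eps (s r1 * s r2 * k) = r1 * eps k * r2.
Proof.
move: k; apply: extA => [||i].
- exact: (klin_comp heps (mull_klinear _)).
- exact: (klin_comp (mulr_klinear _) (klin_comp (mull_klinear _) heps)).
have epsB : eps (mono i) = u ^ i.1 by case: i.
by rewrite -sM eps_s_mono epsB -!mulrA [r2 * _]R_comm.
Qed.

Lemma eps_s r k : eps (s r * k) = r * eps k.
Proof. by rewrite -[s r]mulr1 -s1 eps_bimod mulr1. Qed.

Lemma eps_sK r : eps (s r) = r.
Proof.
by rewrite -[s r]mulr1 -mono00 eps_s_mono expr0z mulr1.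
Qed.

(* The counit laws, equations in A, are tested against all linear forms. *)
Lemma counit_l k : \sum_(p <- Dl k) s (eps p.1) * p.2 = k.
Proof.
apply: (linform_separate hA) => F hF; rewrite (linform_sum hF).
have hG : balR (fun x y => F (s (eps x) * y)).
  apply: bal2_intro => [y|x|x r y].
  - exact: (linform_comp hF (klin_comp (mulr_klinear _) (klin_comp s_klin heps))).
  - exact: (linform_comp hF (mull_klinear _)).
  - by rewrite /raR /laR eps_s sM s_comm -mulrA.
change (evD (fun x y => F (s (eps x) * y)) k = F k).
move: k; apply: extAK => [||[n m]]; [exact: evD_linform|exact: hF|].
by rewrite (evD_mono (_, _) hG) /= hepsB s_upow.
Qed.

Lemma counit_r k : \sum_(p <- Dl k) s (eps p.2) * p.1 = k.
Proof.
apply: (linform_separate hA) => F hF; rewrite (linform_sum hF).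
have hG : balR (fun x y => F (s (eps y) * x)).
  apply: bal2_intro => [y|x|x r y].
  - exact: (linform_comp hF (mull_klinear _)).
  - exact: (linform_comp hF (klin_comp (mulr_klinear _) (klin_comp s_klin heps))).
  - by rewrite /raR /laR eps_s sM s_comm mulrA.
change (evD (fun x y => F (s (eps y) * x)) k = F k).
move: k; apply: extAK => [||[n m]]; [exact: evD_linform|exact: hF|].
by rewrite (evD_mono (_, _) hG) /= -mono0m (hepsB 0) expr0z s1 mul1r.
Qed.

Lemma eps_mul k k' : eps (k * k') = eps (k * s (eps k')).
Proof.
move: k'; apply: extA => [||[a b]].
- exact: (klin_comp heps (mull_klinear _)).
- exact: (klin_comp heps (klin_comp (mull_klinear _) (klin_comp s_klin heps))).
rewrite hepsB s_upow /=; move: k; apply: extA => [||[n m]].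
- exact: (klin_comp heps (mulr_klinear _)).
- exact: (klin_comp heps (mulr_klinear _)).
by rewrite mono_mul mono_Upow !(klinZ heps) !hepsB.
Qed.

Theorem bialgebroid : left_bialgebroid s s Dl eps.
Proof.
split => //.
- split; [exact: s_klin| |exact: s1]; by move=> x y; rewrite R_comm sM.
- exact: s_comm.
- exact: D_bimod.
- exact: eps_bimod.
- exact: coassoc.
- exact: counit_l.
- exact: counit_r.
- exact: takeuchi.
- exact: D1.
- exact: Dmul.
- by rewrite -mono00 hepsB.
- exact: eps_mul.
Qed.

Theorem hopf : left_xR_Hopf s s Dl eps.
Proof. split; [exact: bialgebroid|exact: nu_bij]. Qed.

Section SAYDModule.
Variables (act : R -> A -> R).
Hypotheses (hact : kbilinear act)
  (hactB : forall k n m : int,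
      act (u ^ k) (U ^ n * V ^ m) = q ^ ((k + n) * m) *: u ^ (k + n)).

Lemma act_l w : klinear (fun x => act x w).
Proof. by move=> a x y; rewrite hact.1. Qed.
Lemma act_r v : klinear (fun x => act v x).
Proof. by move=> a x y; rewrite hact.2. Qed.

Lemma act_mono k i : act (u ^ k) (mono i) = q ^ ((k + i.1) * i.2) *: u ^ (k + i.1).
Proof. by case: i => n m; apply: hactB. Qed.

Lemma act1_mono i : act 1 (mono i) = q ^ (i.1 * i.2) *: u ^ i.1.
Proof. by rewrite -(expr0z u) act_mono !add0r. Qed.

Lemma act_s r' r : act r' (s r) = r' * r.
Proof.
move: r'; apply: extR => [||k]; [exact: act_l|exact: mulr_klinear|].
move: r; apply: extR => [||c]; [exact: (klin_comp (act_r _) s_klin)|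
                                exact: mull_klinear|].
by rewrite s_upow -monon0 act_mono /= mulr0 expr0z scale1r exprzDr.
Qed.

Lemma act1 r : act r 1 = r.
Proof. by rewrite -s1 act_s mulr1. Qed.

Lemma actM r k k' : act (act r k) k' = act r (k * k').
Proof.
move: k'; apply: extA => [||[a b]].
- exact: act_r.
- exact: (klin_comp (act_r _) (mull_klinear _)).
move: k; apply: extA => [||[n m]].
- exact: (klin_comp (act_l _) (act_r _)).
- exact: (klin_comp (act_r _) (mulr_klinear _)).
move: r; apply: extR => [||j]; [exact: (klin_comp (act_l _) (act_l _))|
                                exact: act_l|].
rewrite mono_mul (klinZ (act_r _)) act_mono /= (klinZ (act_l _)) !act_mono /=.
by rewrite !scalerA -!qXD !addrA; congr (q ^ _ *: _); ring.
Qed.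

Definition balM (f : A -> R -> K) := bal2 (raR s) (laM s act) f.

Lemma balM_b f : balM f -> forall r x y, f (s r * x) y = f x (y * r).
Proof. by move=> hf r x y; rewrite -act_s; case: hf => _ _; apply. Qed.

Section AntiYetterDrinfeld.
Variables (nuinv : A -> seq (A * A)).
Hypothesis hnu : forall k, teqR s s (nu Dl (nuinv k)) [:: (k, 1)].
Variables (r : R) (f : A -> R -> K).
Hypothesis hf : balM f.

(* The form (a, b) |-> f(b r x, 1 <| a) on A (x)_{R^op} A, which the right
   hand side of the AYD condition evaluates on nu^-1(k_(2) (x) 1). *)
Definition ayd_form (x : A) (a b : A) : K := f (b * s r * x) (act 1 a).

Lemma ayd_form_bal x : balRop (ayd_form x).
Proof.
apply: bal2_intro => [b|a|a r' b].
- exact: (linform_comp (bal2_r hf _) (act_r _)).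
- exact: (linform_comp (bal2_l hf _)
                       (klin_comp (mulr_klinear _) (mulr_klinear _))).
- by rewrite /ayd_form /raRop /laRop -!mulrA balM_b // -[act 1 a * r']act_s actM.
Qed.

Definition ayd_eval (x y : A) : K := teval (ayd_form x) (nuinv y).

(* Any inverse of nu evaluates like the explicit one. *)
Lemma ayd_evalE x y : ayd_eval x y = pullback (ayd_form x) y 1.
Proof.
rewrite /ayd_eval -(pullback_nu (ayd_form_bal x)).
by rewrite (hnu y (pullback_bal (ayd_form_bal x))) teval_seq1.
Qed.

Lemma ayd_eval_bal : balR ayd_eval.
Proof.
apply: balR_intro => [y|x|c x y].
- move=> d x1 x2; rewrite /ayd_eval /ayd_form -teval_comb; apply: teval_ext => a b.
  by rewrite mulrDr -scalerAr (linformD (bal2_l hf _)) (linformZ (bal2_l hf _)).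
- by move=> d y1 y2; rewrite !ayd_evalE; apply: pullback_l.
rewrite !ayd_evalE; move: y; apply: extAK => [||[n m]].
- exact: pullback_l.
- exact: (linform_comp (pullback_l _ _) (mull_klinear _)).
rewrite Upow_mono !pullback_mono /ayd_form /= !mulr1 !act1_mono /=.
have e : V ^ (- m) * s r * (U ^ c * x) =
         q ^ (- (- m * c)) *: (U ^ c * (V ^ (- m) * s r * x)).
  rewrite -[U ^ c]s_upow mulrA -[_ * s r * s _]mulrA s_comm mulrA s_upow.
  by rewrite Vpow_Upow -!scalerAl !mulrA.
rewrite !(linformZ (bal2_r hf _)) e (linformZ (bal2_l hf _)) -[U ^ c]s_upow.
rewrite balM_b // -exprzDr // mulrA -qXD [n + c]addrC.
by congr (q ^ _ * _); ring.
Qed.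

Lemma ayd_main k : f (s (act r k)) 1 = evD ayd_eval k.
Proof.
move: k; apply: extAK => [||[n m]].
- exact: (linform_comp (bal2_l hf _) (klin_comp s_klin (act_r _))).
- exact: (evD_linform ayd_eval_bal).
rewrite (evD_mono (_, _) ayd_eval_bal) ayd_evalE -mono0m pullback_mono.
rewrite /ayd_form /= act1_mono /= mul0r !expr0z scale1r mulr1.
move: r; apply: extRK => [||j].
- exact: (linform_comp (bal2_l hf _) (klin_comp s_klin (act_l _))).
- exact: (linform_comp (bal2_l hf _)
            (klin_comp (mulr_klinear _) (klin_comp (mull_klinear _) s_klin))).
rewrite act_mono /= (klinZ s_klin) !s_upow -mulrA Upow_mono /mono /= mulrA.
rewrite Vpow_Upow -scalerAl -mulrA -exprzDr // addNr expr0z mulr1.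
by congr (f (q ^ _ *: _) 1); ring.
Qed.
End AntiYetterDrinfeld.

Theorem sayd : SAYD s s Dl eps act (fun r : R => [:: (s r, 1)]).
Proof.
split => //.
- exact: act1.
- exact: actM.
- move=> a x y f hf; rewrite /teval /tscale big_cat big_map !big_seq1 /=.
  by rewrite s_klin (linformD (bal2_l hf _)) (linformZ (bal2_l hf _)).
- by move=> r x f hf; rewrite /teval big_map !big_seq1 /= /laM act_s sM s_comm.
- move=> x f [l1 l2 l3 b1 b2]; rewrite !big_seq1 /= s1.
  have hb : balR (fun a b => f a b 1).
    by apply: bal2_intro => [b|a|a r b] // d x1 x2; rewrite ?l1 ?l2.
  change (evD (fun a b => f a b 1) (s x) = f (s x) 1 1).
  move: x; apply: extRK => [||c].
  + exact: (linform_comp (evD_linform hb) s_klin).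
  + by apply: (linform_comp (f := fun a => f a 1 1)) s_klin => d x1 x2; rewrite l1.
  + by rewrite s_upow -monon0 (evD_mono (_, _) hb) expr0z.
- by move=> x; rewrite big_seq1 /laM /= eps_sK act_s mul1r.
- by move=> x r; rewrite big_seq1 /laM /= -sM eps_sK !act_s mul1r.
- move=> nuinv hnu x k f hf; rewrite teval_seq1 (ayd_main hnu x hf k).
  rewrite /evD /teval big_flatten /= big_map; apply: eq_bigr => p _.
  rewrite big_flatten big_map /ayd_eval /teval; apply: eq_bigr => p2 _.
  by rewrite big_seq1.
- by move=> x; rewrite big_seq1 /= act_s mul1r.
Qed.
End SAYDModule.
End Counit.
End Coproduct.

Section Character.
Variables (dlt : A -> R).
Hypotheses (hdlt : klinear dlt)
  (hdltB : forall n m : int, dlt (U ^ n * V ^ m) = q ^ (n * m) *: u ^ n).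

Lemma dlt_mono i : dlt (mono i) = q ^ (i.1 * i.2) *: u ^ i.1.
Proof. by case: i => n m; apply: hdltB. Qed.

Theorem right_char : right_character s dlt.
Proof.
split.
- move=> k r; move: k; apply: extA => [||[n m]].
  + exact: (klin_comp hdlt (mulr_klinear _)).
  + exact: (klin_comp (mulr_klinear _) hdlt).
  move: r; apply: extR => [||c].
  + exact: (klin_comp hdlt (klin_comp (mull_klinear _) s_klin)).
  + exact: mull_klinear.
  rewrite s_upow mono_Upow (klinZ hdlt) !dlt_mono /= scalerA -scalerAl.
  by rewrite -(exprzDr hu) -qXD; congr (q ^ _ *: _); ring.
- move=> k1 k2; move: k2; apply: extA => [||[a b]].
  + exact: (klin_comp hdlt (mull_klinear _)).
  + exact: (klin_comp hdlt (mull_klinear _)).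
  move: k1; apply: extA => [||[n m]].
  + exact: (klin_comp hdlt (mulr_klinear _)).
  + exact: (klin_comp hdlt (klin_comp (mulr_klinear _) (klin_comp s_klin hdlt))).
  rewrite mono_mul dlt_mono (klinZ hdlt) (klinZ s_klin) s_upow -scalerAl Upow_mono.
  rewrite (klinZ hdlt) !dlt_mono /= !scalerA -!qXD.
  by congr (q ^ _ *: u ^ _); ring.
- by rewrite -mono00 dlt_mono /= mul0r !expr0z scale1r.
Qed.
End Character.
End BaseAlgebra.
End QuantumTorus.

Theorem mainTheorem6 (K : fieldType) (q : K) (A R : unitAlgType K)
    (U V : A) (u : R) (s : R -> A)
    (Dl : A -> seq (A * A)) (eps : A -> R) (dlt : A -> R)
    (act : R -> A -> R) :
  q != 0 ->
  (* A_theta : U, V invertible, U V = q V U, basis U^n V^m *)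
  U \is a GRing.unit -> V \is a GRing.unit ->
  U * V = q *: (V * U) ->
  is_basis (fun nm : int * int => U ^ nm.1 * V ^ nm.2) ->
  (* R = K[u, u^-1], embedded by s with s(u) = U *)
  u \is a GRing.unit ->
  is_basis (fun n : int => u ^ n) ->
  is_algmap s -> s u = U ->
  (* Delta(U^n V^m) = U^n V^m (x)_R V^m, extended linearly *)
  (forall a k k', teqR s s (Dl (a *: k + k')) (tscale a (Dl k) ++ Dl k')) ->
  (forall n m : int, teqR s s (Dl (U ^ n * V ^ m)) [:: (U ^ n * V ^ m, V ^ m)]) ->
  (* eps(U^n V^m) = U^n, extended linearly *)
  klinear eps ->
  (forall n m : int, eps (U ^ n * V ^ m) = u ^ n) ->
  (* delta(U^n V^m) = q^(nm) U^n, extended linearly *)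
  klinear dlt ->
  (forall n m : int, dlt (U ^ n * V ^ m) = q ^ (n * m) *: u ^ n) ->
  (* U^k <| U^n V^m = q^((k+n)m) U^(k+n), extended bilinearly *)
  kbilinear act ->
  (forall k n m : int, act (u ^ k) (U ^ n * V ^ m) = q ^ ((k + n) * m) *: u ^ (k + n)) ->
  left_xR_Hopf s s Dl eps /\
  right_character s dlt /\
  SAYD s s Dl eps act (fun r : R => [:: (s r, 1)]).
Proof.
move=> hq hU hV hUV hA hu hR hs hsu hDl hDlB heps hepsB hdlt hdltB hact hactB.
split; first exact: (hopf hq hU hV hUV hA hu hR hs hsu hDl hDlB heps hepsB).
split; first exact: (right_char hq hU hV hUV hA hu hR hs hsu hdlt hdltB).
exact: (sayd hq hU hV hUV hA hu hR hs hsu hDl hDlB heps hepsB hact hactB).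
Qed.
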